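(* Let $\mathcal X,\mathcal W$ be measurable spaces, $\mathcal Z=\mathcal X\times\mathcal W$, and let $(X,W,Y)\sim P_{X,W,Y}$ on $\mathcal X\times\mathcal W\times\mathbb R$ with $\mathbb E[Y^2]<\infty$; write $Z=(X,W)$. Let $n,m\ge1$, $N=n+m$, $\lambda\ge0$. Observe training data $\mathscr D$ consisting of $n$ i.i.d. labeled samples $(Z_i,Y_i)\sim P_{X,W,Y}$ and $m$ i.i.d. unlabeled samples $Z_j\sim P_{X,W}$, and let $(X,W)$ denote an independent test point. Let $\mathcal F\subset L^2(P_X)$, $\mathcal G\subset L^2(P_Z)$ be nonempty closed convex sets (functions on $\mathcal X$ identified with their lifts to $\mathcal Z$), define $$\mathcal{L}(f,g;\lambda)=\frac{n}{N}\mathbb{E}[(Y-f(X))^2]+\frac{m}{N}\mathbb{E}[(g(Z)-f(X))^2]+\lambda\frac{n}{N}\mathbb{E}[(Y-g(Z))^2],$$ and let $(f^\star,g^\star)\in\mathcal F\times\mathcal G$ be a minimizer of $\mathcal L(\cdot,\cdot;\lambda)$ over $\mathcal F\times\mathcal G$. Let $\mu(x)=\mathbb E[Y\mid X=x]$, $\eta(z)=\mathbb E[Y\mid Z=z]$, and assume $\mu\in\mathcal F$, $\mu\in\mathcal G$ and $\eta\in\mathcal G$. Then any estimator $(\hat f,\hat g)\in\mathcal F\times\mathcal G$ (constructed from $\mathscr D$) satisfies $$\mathbb{E}_{\mathscr{D},X}\left[(\hat f(X)-\mu(X))^2\right]\le\frac{\mathbb{E}_{\mathscr{D}}\left[\mathcal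 L(\hat f,\hat g;\lambda)-\mathcal L(f^\star,g^\star;\lambda)\right]}{\gamma_{n,m,\lambda}(\rho_\star)},$$ where $\gamma_{n,m,\lambda}(\rho_\star)=1-\frac{m^2}{N(m+n\lambda)}\rho_\star^2\ge\frac{n}{N}$.
   Context: Define the estimation errors $\hat e_f(X)=f^\star(X)-\hat f(X)$ and $\hat e_g(Z)=g^\star(Z)-\hat g(Z)$, and the correlation score $$\rho_\star=\frac{\big|\mathbb{E}_{\mathscr{D},Z}[\hat e_f(X)\hat e_g(Z)]\big|}{\big(\mathbb{E}_{\mathscr{D},X}[\hat e_f^2(X)]\big)^{1/2}\big(\mathbb{E}_{\mathscr{D},Z}[\hat e_g^2(Z)]\big)^{1/2}}\in[0,1],$$ with the convention $\rho_\star=0$ if either denominator factor is zero. Expectations $\mathbb E_{\mathscr D,\cdot}$ are over the training data and the independent test point; in $\mathbb E_{\mathscr D}[\mathcal L(\hat f,\hat g;\lambda)]$ the population loss is evaluated at the (data-dependent) functions and then averaged over $\mathscr D$. *)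

From HB Require Import structures.
From mathcomp Require Import all_boot all_order all_algebra.
From mathcomp Require Import all_classical all_reals all_analysis.
Set Implicit Arguments. Unset Strict Implicit. Unset Printing Implicit Defensive.
Import Order.TTheory GRing.Theory Num.Theory.
Local Open Scope classical_set_scope.
Local Open Scope ring_scope.

Definition events_of d (Om : measurableType d) dT (T : measurableType dT)
  (V : Om -> T) : set (set Om) := [set V @^-1` A | A in measurable].

Definition mutually_indep d (Om : measurableType d) (R : realType)
  (Q : probability Om R) (I : finType) (E : I -> set (set Om)) : Prop :=
  forall (J : {set I}) (B : I -> set Om),
    (forall i, i \in J -> E i (B i)) ->
    Q (\bigcap_(i in [set i | i \in J]) B i) = (\prod_(i in J) Q (B i))%E.

Definition same_law d1 d2 dT (O1 : measurableType d1) (O2 : measurableType d2)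
  (T : measurableType dT) (R : realType) (P1 : probability O1 R)
  (P2 : probability O2 R) (V1 : O1 -> T) (V2 : O2 -> T) : Prop :=
  forall A : set T, measurable A -> P1 (V1 @^-1` A) = P2 (V2 @^-1` A).

Local Open Scope ereal_scope.

Section Defs.
Context (R : realType) (d : measure_display) (Om : measurableType d)
  (P : probability Om R).

Definition sq_integrable (V : Om -> R) : Prop :=
  \int[P]_w ((V w) ^+ 2)%:E < +oo.

Context (dT : measure_display) (T : measurableType dT) (V : Om -> T).

(** [h] is (a representative of) an element of [L^2(P_V)], [P_V] the law of [V]. *)
Definition inL2 (h : T -> R) : Prop :=
  measurable_fun setT h /\ sq_integrable (h \o V).

Definition ae_eq_law (f h : T -> R) : Prop :=
  {ae P, forall w, f (V w) = h (V w)}.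

(** The [L^2(P_V)]-class of [h] belongs to (the set of classes of) [F]. *)
Definition L2mem (F : set (T -> R)) (h : T -> R) : Prop :=
  exists2 f, F f & ae_eq_law f h.

Definition subset_L2 (F : set (T -> R)) : Prop := forall f, F f -> inL2 f.

Definition closed_L2 (F : set (T -> R)) : Prop :=
  forall (fs : nat -> T -> R) (h : T -> R),
    (forall k, F (fs k)) -> inL2 h ->
    (fun k => \int[P]_w (((fs k (V w)) - h (V w)) ^+ 2)%:E) @ \oo --> 0 ->
    L2mem F h.

Definition convex_L2 (F : set (T -> R)) : Prop :=
  forall (f g : T -> R) (t : R), F f -> F g -> (0 <= t <= 1)%R ->
    L2mem F (fun x => t * f x + (1 - t) * g x)%R.

Definition is_cond_exp (Y : Om -> R) (mu : T -> R) : Prop :=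
  [/\ measurable_fun setT mu,
      P.-integrable setT (fun w => (mu (V w))%:E) &
      forall A : set T, measurable A ->
        \int[P]_(w in V @^-1` A) (Y w)%:E
        = \int[P]_(w in V @^-1` A) (mu (V w))%:E].
End Defs.

Definition loss (R : realType) d (Om : measurableType d) (P : probability Om R)
  dX dW (TX : measurableType dX) (TW : measurableType dW)
  (X : Om -> TX) (W : Om -> TW) (Y : Om -> R) (n m : nat) (lam : R)
  (f : TX -> R) (g : TX * TW -> R) : \bar R :=
  let N := (n + m)%N in
  ((n%:R / N%:R)%:E * \int[P]_w ((Y w - f (X w)) ^+ 2)%:E
   + (m%:R / N%:R)%:E * \int[P]_w ((g (X w, W w) - f (X w)) ^+ 2)%:E
   + (lam * (n%:R / N%:R))%:E * \int[P]_w ((Y w - g (X w, W w)) ^+ 2)%:E).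

(** Correlation score from the cross moment [c] and the two second moments
    [a], [b], with the convention [0] when a denominator factor is zero. *)
Definition corr_score (R : realType) (c a b : \bar R) : R :=
  if (a == 0) || (b == 0) then 0%R
  else (`|fine c| / (Num.sqrt (fine a) * Num.sqrt (fine b)))%R.

Definition gamma_nml (R : realType) (n m : nat) (lam rho : R) : R :=
  (1 - (m%:R ^+ 2) / ((n + m)%N%:R * (m%:R + n%:R * lam)) * rho ^+ 2)%R.

(* In L2(P) the loss is a quadratic form in (f(X), g(Z)).  Because mu(X) and
   eta(Z) are conditional expectations, Y - mu(X) is orthogonal to functions of X
   and Y - eta(Z) to functions of Z; hence, with t = m / (m + n lam), the
   first-order part of the loss around (mu, t mu + (1 - t) eta) vanishes, and
   L(f, g) - L(mu, t mu + (1 - t) eta) = (n/N)|a|^2 + (m/N)|b - a|^2 + lam (n/N)|b|^2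
   for a = f - mu, b = g - (t mu + (1 - t) eta).  That point lies in F x G by
   convexity, so the minimiser (fstar, gstar) equals it in L2, and for every
   (f, g) the excess loss is |e_f|^2 + k |e_g|^2 - 2 (m/N) <e_f, e_g> with
   k = (m + n lam)/N, while |f - mu| = |e_f|.  Averaging over the data, bounding
   the averaged cross moment by rho |e_f| |e_g| and completing the square in |e_g|
   gives gamma E|e_f|^2 <= E[excess].  Nothing but measurability is needed of
   the data. *)

From HB Require Import structures.
From mathcomp Require Import all_boot all_order all_algebra.
From mathcomp Require Import all_classical all_reals all_analysis.
From mathcomp Require Import ring lra measurable_realfun.
Import Order.TTheory GRing.Theory Num.Theory.
Local Open Scope classical_set_scope.
Local Open Scope ring_scope.

Lemma discr_le_of_quadratic_ge0 {R : realFieldType} (a b c : R) : 0 <= b ->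
  (forall t, 0 <= a - 2 * t * c + t ^+ 2 * b) -> c ^+ 2 <= a * b.
Proof.
move=> b0 q_ge0; have [b_gt0|b_le0] := ltP 0 b.
  have := q_ge0 (c / b).
  rewrite (_ : _ - _ + _ = (a * b - c ^+ 2) / b); last by field; exact: lt0r_neq0.
  by rewrite pmulr_lge0 ?invr_gt0 // subr_ge0.
have b_eq0 : b = 0 by apply/eqP; rewrite eq_le b_le0 b0.
rewrite b_eq0 in q_ge0 *; have [->|c_neq0] := eqVneq c 0; first by rewrite expr0n mulr0.
have := q_ge0 ((a + 1) / (2 * c)); rewrite mulr0 addr0.
by rewrite (_ : 2 * _ * c = a + 1); [lra | field].
Qed.

Section L2_inner_product.
Context {R : realType} {d : measure_display} {T : measurableType d}
  (mu : {measure set T -> \bar R}).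

Lemma integrable_le_normD {f g1 g2 : T -> R} :
  mu.-integrable setT (fun x => (g1 x)%:E) -> mu.-integrable setT (fun x => (g2 x)%:E) ->
  measurable_fun setT f -> (forall x, `|f x| <= `|g1 x| + `|g2 x|) -> mu.-integrable setT (fun x => (f x)%:E).
Proof.
move=> i1 i2 mf fg.
apply: (le_integrable measurableT _ _ (integrableD measurableT
  (integrable_abse i1) (integrable_abse i2))); first exact/measurable_EFinP.
by move=> x _ /=; rewrite lee_fin [X in (_ <= X)%R]ger0_norm ?addr_ge0.
Qed.

Lemma ge0_integrable_lty {f : T -> R} : measurable_fun setT f -> (forall x, 0 <= f x) ->
  (\int[mu]_x (f x)%:E < +oo)%E -> mu.-integrable setT (fun x => (f x)%:E).
Proof.
move=> mf f0 foo; apply/integrableP; split; first exact/measurable_EFinP.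
by under eq_integral do rewrite gee0_abs ?lee_fin //.
Qed.

Definition L2 (u : T -> R) : Prop :=
  measurable_fun setT u /\ (\int[mu]_x ((u x) ^+ 2)%:E < +oo)%E.

Definition dotL2 (u v : T -> R) : R := fine (\int[mu]_x (u x * v x)%:E)%E.

Lemma L2_integrable_sqr {u : T -> R} : L2 u ->
  mu.-integrable setT (fun x => ((u x) ^+ 2)%:E).
Proof.
move=> [mu_ u2]; apply: ge0_integrable_lty => // [|x]; last exact: sqr_ge0.
exact: measurable_funX.
Qed.

Lemma L2_integrableM {u v : T -> R} : L2 u -> L2 v ->
  mu.-integrable setT (fun x => (u x * v x)%:E).
Proof.
move=> hu hv; apply: (integrable_le_normD (L2_integrable_sqr hu) (L2_integrable_sqr hv)).
  by apply: measurable_funM; [exact: hu.1 | exact: hv.1].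
move=> x; rewrite normrM (ger0_norm (sqr_ge0 (u x))) (ger0_norm (sqr_ge0 (v x))).
have := sqr_ge0 (`|u x| - `|v x|); rewrite sqrrB !real_normK ?num_real //.
have := sqr_ge0 (u x); have := sqr_ge0 (v x); lra.
Qed.

Lemma L2_le {u v h : T -> R} (a b : R) : L2 u -> L2 v -> measurable_fun setT h ->
  0 <= a -> 0 <= b -> (forall x, `|h x| <= a * `|u x| + b * `|v x|) -> L2 h.
Proof.
move=> hu hv mh a0 b0 hb; split => //.
have sqr_bound x : h x ^+ 2 <= 2 * a ^+ 2 * u x ^+ 2 + 2 * b ^+ 2 * v x ^+ 2.
  have : h x ^+ 2 <= (a * `|u x| + b * `|v x|) ^+ 2.
    by rewrite -(real_normK (num_real (h x))) ler_sqr ?nnegrE ?addr_ge0 ?mulr_ge0.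
  have := sqr_ge0 (a * `|u x| - b * `|v x|).
  by rewrite sqrrB sqrrD !exprMn !real_normK ?num_real //; lra.
have : mu.-integrable setT (fun x => ((h x) ^+ 2)%:E).
  apply: (le_integrable measurableT _ _ (integrableD measurableT
    (integrableZl measurableT (2 * a ^+ 2) (L2_integrable_sqr hu))
    (integrableZl measurableT (2 * b ^+ 2) (L2_integrable_sqr hv)))).
    exact/measurable_EFinP/measurable_funX.
  move=> x _ /=; rewrite lee_fin ger0_norm ?sqr_ge0 //.
  by rewrite (le_trans (sqr_bound x)) // ler_norm.
by move/integrableP => [_]; under eq_integral do rewrite gee0_abs ?lee_fin ?sqr_ge0 //.
Qed.

Lemma L2D {u v : T -> R} : L2 u -> L2 v -> L2 (fun x => u x + v x).
Proof.
move=> hu hv; apply: (L2_le 1 1 hu hv _ ler01 ler01) => [|x].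
  by apply: measurable_funD; [exact: hu.1 | exact: hv.1].
by rewrite !mul1r ler_normD.
Qed.

Lemma L2B {u v : T -> R} : L2 u -> L2 v -> L2 (fun x => u x - v x).
Proof.
move=> hu hv; apply: (L2_le 1 1 hu hv _ ler01 ler01) => [|x].
  by apply: measurable_funB; [exact: hu.1 | exact: hv.1].
by rewrite !mul1r ler_normB.
Qed.

Lemma L2Z (c : R) {u : T -> R} : L2 u -> L2 (fun x => c * u x).
Proof.
move=> hu; apply: (L2_le `|c| 0 hu hu _ (normr_ge0 c) (lexx 0)) => [|x].
  by apply: measurable_funM => //; exact: hu.1.
by rewrite mul0r addr0 normrM.
Qed.

Lemma L2_ae {u1 u2 : T -> R} : L2 u1 -> measurable_fun setT u2 ->
  {ae mu, forall x, u1 x = u2 x} -> L2 u2.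
Proof.
move=> [m1 s1] m2 ae; split => //.
rewrite (ae_eq_integral (fun x => ((u1 x) ^+ 2)%:E)) //.
- exact/measurable_EFinP/measurable_funX.
- exact/measurable_EFinP/measurable_funX.
- by apply: filterS ae => x h _; rewrite h.
Qed.

Lemma dotL2E {u v : T -> R} : L2 u -> L2 v ->
  (\int[mu]_x (u x * v x)%:E = (dotL2 u v)%:E)%E.
Proof. by move=> hu hv; rewrite fineK // integrable_fin_num // L2_integrableM. Qed.

Lemma dotL2_sqrE {u : T -> R} : L2 u ->
  (\int[mu]_x ((u x) ^+ 2)%:E = (dotL2 u u)%:E)%E.
Proof. by move=> hu; under eq_integral do rewrite expr2; exact: dotL2E. Qed.

Lemma dotL2C (u v : T -> R) : dotL2 u v = dotL2 v u.
Proof. by rewrite /dotL2; under eq_integral do rewrite mulrC. Qed.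

Lemma dotL2_ge0 (u : T -> R) : 0 <= dotL2 u u.
Proof. by rewrite fine_ge0 // integral_ge0 // => x _; rewrite lee_fin -expr2 sqr_ge0. Qed.

Lemma eq_dotL2 (u1 v1 u2 v2 : T -> R) : (forall x, u1 x * v1 x = u2 x * v2 x) ->
  dotL2 u1 v1 = dotL2 u2 v2.
Proof. by move=> e; rewrite /dotL2; under eq_integral do rewrite e. Qed.

Lemma ae_eq_dotL2 {u1 u2 : T -> R} (h : T -> R) : L2 u1 -> L2 u2 -> L2 h ->
  {ae mu, forall x, u1 x = u2 x} -> dotL2 u1 h = dotL2 u2 h.
Proof.
move=> h1 h2 hh ae; rewrite /dotL2; congr fine; apply: ae_eq_integral => //.
- by apply/measurable_EFinP/measurable_funM; [exact: h1.1 | exact: hh.1].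
- by apply/measurable_EFinP/measurable_funM; [exact: h2.1 | exact: hh.1].
- by apply: filterS ae => x ->.
Qed.

Lemma dotL2Dl {u v h : T -> R} : L2 u -> L2 v -> L2 h ->
  dotL2 (fun x => u x + v x) h = dotL2 u h + dotL2 v h.
Proof.
move=> hu hv hh; rewrite /dotL2.
under eq_integral do rewrite mulrDl EFinD.
rewrite integralD //; try exact: L2_integrableM.
by rewrite fineD // integrable_fin_num // L2_integrableM.
Qed.

Lemma dotL2Bl {u v h : T -> R} : L2 u -> L2 v -> L2 h ->
  dotL2 (fun x => u x - v x) h = dotL2 u h - dotL2 v h.
Proof.
move=> hu hv hh; rewrite /dotL2.
under eq_integral do rewrite mulrBl EFinB.
rewrite integralB //; try exact: L2_integrableM.
by rewrite fineB // integrable_fin_num // L2_integrableM.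
Qed.

Lemma dotL2Zl (c : R) {u h : T -> R} : L2 u -> L2 h ->
  dotL2 (fun x => c * u x) h = c * dotL2 u h.
Proof.
move=> hu hh; rewrite /dotL2.
under eq_integral do rewrite -mulrA EFinM.
rewrite integralZl //; last exact: L2_integrableM.
by rewrite fineM // integrable_fin_num // L2_integrableM.
Qed.

Lemma dotL2Dr {u v h : T -> R} : L2 u -> L2 v -> L2 h ->
  dotL2 h (fun x => u x + v x) = dotL2 h u + dotL2 h v.
Proof. by move=> *; rewrite dotL2C dotL2Dl // ![dotL2 _ h]dotL2C. Qed.

Lemma dotL2Br {u v h : T -> R} : L2 u -> L2 v -> L2 h ->
  dotL2 h (fun x => u x - v x) = dotL2 h u - dotL2 h v.
Proof. by move=> *; rewrite dotL2C dotL2Bl // ![dotL2 _ h]dotL2C. Qed.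

Lemma dotL2Zr (c : R) {u h : T -> R} : L2 u -> L2 h ->
  dotL2 h (fun x => c * u x) = c * dotL2 h u.
Proof. by move=> *; rewrite dotL2C dotL2Zl // dotL2C. Qed.

Lemma dotL2_sqrB {u v : T -> R} : L2 u -> L2 v ->
  dotL2 (fun x => u x - v x) (fun x => u x - v x) =
  dotL2 u u - 2 * dotL2 u v + dotL2 v v.
Proof.
move=> hu hv; rewrite dotL2Bl ?dotL2Br //; try exact: L2B.
by rewrite [dotL2 v u]dotL2C; ring.
Qed.

Lemma dotL2_sqrD {u v : T -> R} : L2 u -> L2 v ->
  dotL2 (fun x => u x + v x) (fun x => u x + v x) =
  dotL2 u u + 2 * dotL2 u v + dotL2 v v.
Proof.
move=> hu hv; rewrite dotL2Dl ?dotL2Dr //; try exact: L2D.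
by rewrite [dotL2 v u]dotL2C; ring.
Qed.

Lemma dotL2_polarization {u v : T -> R} : L2 u -> L2 v ->
  dotL2 u v = (dotL2 (fun x => u x + v x) (fun x => u x + v x)
               - dotL2 (fun x => u x - v x) (fun x => u x - v x)) / 4.
Proof. by move=> hu hv; rewrite dotL2_sqrD // dotL2_sqrB //; field. Qed.

Lemma dotL2_CS {u v : T -> R} : L2 u -> L2 v ->
  dotL2 u v ^+ 2 <= dotL2 u u * dotL2 v v.
Proof.
move=> hu hv; apply: discr_le_of_quadratic_ge0 => [|t]; first exact: dotL2_ge0.
have htv := L2Z t hv; have := dotL2_ge0 (fun x => u x - t * v x).
rewrite dotL2_sqrB ?dotL2Zl ?dotL2Zr ?dotL2Zl //.
by rewrite -!mulrA mulrCA (mulrA t) -expr2.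
Qed.

Lemma dotL2_null {z : T -> R} (h : T -> R) : L2 z -> L2 h ->
  dotL2 z z = 0 -> dotL2 z h = 0.
Proof.
move=> hz hh z0; have := dotL2_CS hz hh; rewrite z0 mul0r => zh.
by apply/eqP; rewrite -sqrf_eq0 eq_le zh sqr_ge0.
Qed.

End L2_inner_product.

Ltac L2_closure := repeat first [assumption | apply: L2B | apply: L2D | apply: L2Z].

Lemma L2_integrable {R : realType} {d : measure_display} {T : measurableType d}
  (mu : {finite_measure set T -> \bar R}) {u : T -> R} :
  L2 mu u -> mu.-integrable setT (fun x => (u x)%:E).
Proof.
move=> hu; apply: (integrable_le_normD mu (finite_measure_integrable_cst mu 1 measurableT)
  (L2_integrable_sqr mu hu) hu.1) => x.
rewrite normr1 (ger0_norm (sqr_ge0 (u x))) -(real_normK (num_real (u x))).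
have := sqr_ge0 (`|u x| - 1); rewrite sqrrB expr1n mulr1 mulr2n.
by have := sqr_ge0 `|u x|; lra.
Qed.

Lemma L2_inL2 {R : realType} {d : measure_display} {Om : measurableType d}
  {P : probability Om R} {dT : measure_display} {T : measurableType dT}
  {V : Om -> T} {h : T -> R} :
  measurable_fun setT V -> inL2 P V h -> L2 P (fun w => h (V w)).
Proof. by move=> mV [mh h2]; split => //; exact: measurableT_comp. Qed.

Section preimage_integrals.
Context {R : realType} {d : measure_display} {Om : measurableType d}
  (P : {measure set Om -> \bar R}) {dT : measure_display} {T : measurableType dT}
  (V : Om -> T) (mV : measurable_fun setT V).
Local Open Scope ereal_scope.
Import HBNNSimple.

Let measurable_preimage {B : set T} : measurable B -> measurable (V @^-1` B).
Proof. by move=> mB; rewrite -[X in measurable X]setTI; exact: mV. Qed.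

Lemma integral_nnsfun_compM (s : {nnsfun T >-> R}) (p : Om -> R) :
  measurable_fun setT p -> (forall w, (0 <= p w)%R) ->
  \int[P]_w (s (V w) * p w)%:E =
  \sum_(y \in range s) (y%:E * \int[P]_(w in V @^-1` (s @^-1` [set y])) (p w)%:E).
Proof.
move=> mp p0.
have mB y : measurable (V @^-1` (s @^-1` [set y])).
  by apply: measurable_preimage; exact: measurable_sfunP.
transitivity (\int[P]_w (\sum_(y \in range s)
   (y * (\1_(V @^-1` (s @^-1` [set y])) w * p w))%:E)).
  apply: eq_integral => w _; rewrite fsumEFin //; congr EFin.
  by rewrite fimfunE mulr_fsuml; apply: eq_fsbigr => y _; rewrite mulrA.
rewrite ge0_integral_fsum //; last 2 first.
- move=> y; apply/measurable_EFinP/measurable_funM => //.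
  exact/measurable_funM/mp/measurable_indic.
- move=> y w _; rewrite lee_fin.
  have [|/negP yr] := boolP (y \in range s).
    by rewrite inE => -[t _ <-]; rewrite !mulr_ge0.
  rewrite indicE; have [|_] := boolP (w \in _); last by rewrite !mul0r mulr0.
  by rewrite inE /= => sy; exfalso; apply: yr; rewrite inE; exists (V w).
apply: eq_fsbigr => y; rewrite inE => -[t _ <-].
under eq_integral do rewrite EFinM.
rewrite ge0_integralZl //; last 3 first.
- exact/measurable_EFinP/measurable_funM/mp/measurable_indic.
- by move=> w _; rewrite lee_fin mulr_ge0.
- by rewrite lee_fin.
congr (_ * _); rewrite [RHS]integral_mkcond; apply: eq_integral => w _.
by rewrite patchE indicE; case: (boolP (w \in _)) => _; rewrite ?mul1r ?mul0r.
Qed.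

Lemma ge0_integral_compM_eq {p q : Om -> R} :
  measurable_fun setT p -> measurable_fun setT q ->
  (forall w, (0 <= p w)%R) -> (forall w, (0 <= q w)%R) ->
  (forall B, measurable B ->
    \int[P]_(w in V @^-1` B) (p w)%:E = \int[P]_(w in V @^-1` B) (q w)%:E) ->
  forall k : T -> R, measurable_fun setT k -> (forall t, (0 <= k t)%R) ->
  \int[P]_w (k (V w) * p w)%:E = \int[P]_w (k (V w) * q w)%:E.
Proof.
move=> mp mq p0 q0 pq k mk k0.
have mkE : measurable_fun setT (EFin \o k) by exact/measurable_EFinP.
pose g := nnsfun_approx measurableT mkE.
suff approxE (r : Om -> R) : measurable_fun setT r -> (forall w, (0 <= r w)%R) ->
    \int[P]_w (k (V w) * r w)%:E = limn (fun n => \int[P]_w (g n (V w) * r w)%:E).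
  rewrite approxE // approxE //; congr (limn _); apply/funext => n.
  rewrite !integral_nnsfun_compM //.
  by apply: eq_fsbigr => y _; rewrite pq //; exact: measurable_sfunP.
move=> mr r0; rewrite -monotone_convergence //; last 3 first.
- move=> n; apply/measurable_EFinP/measurable_funM => //.
  by apply: measurableT_comp => //; exact: measurable_funPT.
- by move=> n w _; rewrite lee_fin mulr_ge0.
- move=> w _ a b ab; rewrite lee_fin ler_wpM2r //.
  by have /lefP := nd_nnsfun_approx measurableT mkE ab; apply.
apply: eq_integral => w _; apply/esym/cvg_lim => //.
rewrite EFinM; under eq_fun do rewrite EFinM.
apply: cvgeZr => //; apply: (cvg_nnsfun_approx measurableT mkE) => // t _.
by rewrite lee_fin.
Qed.

Lemma integral_compM_eq_nneg {p q : Om -> R} :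
  P.-integrable setT (fun w => (p w)%:E) -> P.-integrable setT (fun w => (q w)%:E) ->
  (forall B, measurable B ->
    \int[P]_(w in V @^-1` B) (p w)%:E = \int[P]_(w in V @^-1` B) (q w)%:E) ->
  forall k : T -> R, measurable_fun setT k -> (forall t, (0 <= k t)%R) ->
  P.-integrable setT (fun w => (k (V w) * p w)%:E) ->
  P.-integrable setT (fun w => (k (V w) * q w)%:E) ->
  \int[P]_w (k (V w) * p w)%:E = \int[P]_w (k (V w) * q w)%:E.
Proof.
move=> ip iq pq k mk k0 ikp ikq.
have mp : measurable_fun setT p by exact/measurable_EFinP/(measurable_int P ip).
have mq : measurable_fun setT q by exact/measurable_EFinP/(measurable_int P iq).
(* shifting by [|p| + |q|] reduces to nonnegative densities *)
pose c w := (`|p w| + `|q w|)%R.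
have mc : measurable_fun setT c.
  by apply: measurable_funD; apply: measurableT_comp => //; exact: normr_measurable.
have ic : P.-integrable setT (fun w => (c w)%:E).
  by apply: (integrable_le_normD P ip iq mc) => w; rewrite /c ger0_norm ?addr_ge0.
have ikc : P.-integrable setT (fun w => (k (V w) * c w)%:E).
  apply: (integrable_le_normD P ikp ikq).
    by apply: measurable_funM => //; exact: measurableT_comp.
  by move=> w; rewrite /c mulrDr (le_trans (ler_normD _ _)) // !normrM !normr_id.
have shiftE (r : Om -> R) : P.-integrable setT (fun w => (k (V w) * r w)%:E) ->
    \int[P]_w (k (V w) * (r w + c w))%:E =
    \int[P]_w (k (V w) * r w)%:E + \int[P]_w (k (V w) * c w)%:E.
  by move=> ikr; under eq_integral do rewrite mulrDr EFinD; rewrite integralD.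
have : \int[P]_w (k (V w) * (p w + c w))%:E = \int[P]_w (k (V w) * (q w + c w))%:E.
  apply: ge0_integral_compM_eq => //; try exact: measurable_funD.
  - move=> w; rewrite /c; have := ler_norm (- p w); rewrite normrN.
    by have := normr_ge0 (q w); lra.
  - move=> w; rewrite /c; have := ler_norm (- q w); rewrite normrN.
    by have := normr_ge0 (p w); lra.
  move=> B mB; have mVB := measurable_preimage mB.
  have iS f : P.-integrable setT f -> P.-integrable (V @^-1` B) f.
    exact: integrableS measurableT mVB (@subsetT _ _).
  under eq_integral do rewrite EFinD; under [RHS]eq_integral do rewrite EFinD.
  by rewrite integralD ?iS // [RHS]integralD ?iS // pq.
rewrite shiftE // shiftE // => /(congr1 (fun z => z - \int[P]_w (k (V w) * c w)%:E)).
by rewrite !addeK // integrable_fin_num.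
Qed.

Lemma integral_compM_eq {p q : Om -> R} :
  P.-integrable setT (fun w => (p w)%:E) -> P.-integrable setT (fun w => (q w)%:E) ->
  (forall B, measurable B ->
    \int[P]_(w in V @^-1` B) (p w)%:E = \int[P]_(w in V @^-1` B) (q w)%:E) ->
  forall k : T -> R, measurable_fun setT k ->
  P.-integrable setT (fun w => (k (V w) * p w)%:E) ->
  P.-integrable setT (fun w => (k (V w) * q w)%:E) ->
  \int[P]_w (k (V w) * p w)%:E = \int[P]_w (k (V w) * q w)%:E.
Proof.
move=> ip iq pq k mk ikp ikq.
have mp : measurable_fun setT p by exact/measurable_EFinP/(measurable_int P ip).
have mq : measurable_fun setT q by exact/measurable_EFinP/(measurable_int P iq).
have mkp := measurable_funrpos mk; have mkn := measurable_funrneg mk.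
have dominated (k' : T -> R) (r : Om -> R) : measurable_fun setT k' ->
    (forall t, (0 <= k' t <= `|k t|)%R) -> measurable_fun setT r ->
    P.-integrable setT (fun w => (k (V w) * r w)%:E) ->
    P.-integrable setT (fun w => (k' (V w) * r w)%:E).
  move=> mk' k'k mr ikr; apply: (integrable_le_normD P ikr ikr).
    by apply: measurable_funM => //; exact: measurableT_comp.
  move=> w; have /andP[k'0 k'le] := k'k (V w); rewrite !normrM (ger0_norm k'0).
  by rewrite ler_wpDr ?mulr_ge0 // ler_wpM2r.
have kp t : (0 <= k^\+ t <= `|k t|)%R by rewrite funrpos_ge0 ge_max ler_norm normr_ge0.
have kn t : (0 <= k^\- t <= `|k t|)%R.
  by rewrite funrneg_ge0 ge_max -normrN ler_norm normr_ge0.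
have splitE (r : Om -> R) : measurable_fun setT r ->
    P.-integrable setT (fun w => (k (V w) * r w)%:E) -> \int[P]_w (k (V w) * r w)%:E =
    \int[P]_w (k^\+ (V w) * r w)%:E - \int[P]_w (k^\- (V w) * r w)%:E.
  move=> mr ikr; rewrite -integralB //; try exact: dominated.
  apply: eq_integral => w _; rewrite -EFinB -mulrBl.
  by rewrite -[in LHS](funrposBneg k).
have nnegE := integral_compM_eq_nneg ip iq pq.
rewrite splitE // [RHS]splitE // (nnegE _ mkp) ?(nnegE _ mkn) //;
  by [exact: funrpos_ge0 | exact: funrneg_ge0 | exact: dominated].
Qed.

End preimage_integrals.

Lemma cond_exp_orthogonal {R : realType} {d : measure_display} {Om : measurableType d}
  (P : probability Om R) {dT : measure_display} {T : measurableType dT}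
  {V : Om -> T} {Y : Om -> R} {mu h : T -> R} :
  measurable_fun setT V -> P.-integrable setT (fun w => (Y w)%:E) ->
  is_cond_exp P V Y mu -> measurable_fun setT h ->
  P.-integrable setT (fun w => (Y w * h (V w))%:E) ->
  P.-integrable setT (fun w => (mu (V w) * h (V w))%:E) ->
  (\int[P]_w (Y w * h (V w))%:E = \int[P]_w (mu (V w) * h (V w))%:E)%E.
Proof.
move=> mV iY [_ imu ce] mh iYh imuh.
under eq_integral do rewrite mulrC; under [RHS]eq_integral do rewrite mulrC.
apply: integral_compM_eq => //.
- by under eq_fun do rewrite mulrC.
- by under eq_fun do rewrite mulrC.
Qed.

Section quadratic_loss.
Context {R : realType} {d : measure_display} {Om : measurableType d}
  (P : {measure set Om -> \bar R}) (Y : Om -> R) (c1 c2 c3 : R).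

Definition lossL2 (u v : Om -> R) : R :=
  c1 * dotL2 P (fun w => Y w - u w) (fun w => Y w - u w)
  + c2 * dotL2 P (fun w => v w - u w) (fun w => v w - u w)
  + c3 * dotL2 P (fun w => Y w - v w) (fun w => Y w - v w).

Lemma lossL2_expand {u0 v0 u v : Om -> R} : L2 P Y ->
  L2 P u0 -> L2 P v0 -> L2 P u -> L2 P v ->
  let a := fun w => u w - u0 w in let b := fun w => v w - v0 w in
  lossL2 u v - lossL2 u0 v0 =
  c1 * dotL2 P a a + c2 * dotL2 P (fun w => b w - a w) (fun w => b w - a w)
  + c3 * dotL2 P b b
  - 2 * (c1 * dotL2 P (fun w => Y w - u0 w) a
         - c2 * dotL2 P (fun w => v0 w - u0 w) (fun w => b w - a w)
         + c3 * dotL2 P (fun w => Y w - v0 w) b).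
Proof.
move=> hY hu0 hv0 hu hv a b; rewrite /lossL2.
have -> : (fun w => Y w - u w) = (fun w => (Y w - u0 w) - a w).
  by apply/funext => w; rewrite /a; ring.
have -> : (fun w => v w - u w) = (fun w => (v0 w - u0 w) + (b w - a w)).
  by apply/funext => w; rewrite /a /b; ring.
have -> : (fun w => Y w - v w) = (fun w => (Y w - v0 w) - b w).
  by apply/funext => w; rewrite /b; ring.
rewrite (dotL2_sqrB P (u := fun w => Y w - u0 w) (v := a));
  rewrite ?(dotL2_sqrD P (u := fun w => v0 w - u0 w) (v := fun w => b w - a w));
  rewrite ?(dotL2_sqrB P (u := fun w => Y w - v0 w) (v := b)); try by L2_closure.
ring.
Qed.

Lemma lossL2_sub_min {M E u0 v0 u v : Om -> R} (t : R) :
  L2 P Y -> L2 P M -> L2 P E -> L2 P u0 -> L2 P v0 -> L2 P u -> L2 P v ->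
  c2 * (1 - t) = c3 * t ->
  (forall h, L2 P h -> dotL2 P u0 h = dotL2 P M h) ->
  (forall h, L2 P h -> dotL2 P v0 h = t * dotL2 P M h + (1 - t) * dotL2 P E h) ->
  let a := fun w => u w - u0 w in let b := fun w => v w - v0 w in
  dotL2 P Y a = dotL2 P M a -> dotL2 P E a = dotL2 P M a ->
  dotL2 P Y b = dotL2 P E b ->
  lossL2 u v - lossL2 u0 v0 =
  c1 * dotL2 P a a + c2 * dotL2 P (fun w => b w - a w) (fun w => b w - a w)
  + c3 * dotL2 P b b.
Proof.
move=> hY hM hE hu0 hv0 hu hv ct u0M v0ME a b YMa EMa YEb.
have ha : L2 P a by L2_closure.
have hb : L2 P b by L2_closure.
have hba : L2 P (fun w => b w - a w) by L2_closure.
rewrite lossL2_expand // (dotL2Bl P hY hu0 ha) (dotL2Bl P hv0 hu0 hba) (dotL2Bl P hY hv0 hb).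
rewrite (u0M _ ha) (u0M _ hba) (v0ME _ hba) (v0ME _ hb) (dotL2Br P hb ha hM).
rewrite (dotL2Br P hb ha hE) YMa EMa YEb.
set cross := (X in _ - 2 * X).
(* every first-order term is a multiple of <E - M, b> *)
have -> : cross = (c3 * t - c2 * (1 - t)) * (dotL2 P E b - dotL2 P M b).
  by rewrite /cross; ring.
by rewrite ct subrr mul0r mulr0 subr0.
Qed.

Lemma lossL2_quad_eq0 {a b : Om -> R} : L2 P a -> L2 P b ->
  0 < c1 -> 0 < c2 -> 0 <= c3 ->
  c1 * dotL2 P a a + c2 * dotL2 P (fun w => b w - a w) (fun w => b w - a w)
    + c3 * dotL2 P b b <= 0 ->
  dotL2 P a a = 0 /\ dotL2 P b b = 0.
Proof.
move=> ha hb c1p c2p c3p H.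
have a0 := dotL2_ge0 P a; have b0 := dotL2_ge0 P b.
have ba0 := dotL2_ge0 P (fun w => b w - a w).
have aa : dotL2 P a a = 0.
  apply/eqP; rewrite eq_le a0 andbT -(pmulr_rle0 _ c1p).
  apply: le_trans H; rewrite -addrA lerDl.
  by rewrite addr_ge0 // mulr_ge0 // ltW.
split => //.
move: H; rewrite dotL2_sqrB // aa (dotL2C P b a) (dotL2_null P b ha hb aa).
rewrite mulr0 add0r mulr0 subr0 addr0 => H.
apply/eqP; rewrite eq_le b0 andbT -(pmulr_rle0 _ c2p).
by apply: le_trans H; rewrite lerDl mulr_ge0.
Qed.

End quadratic_loss.

Lemma psd2_pairing_ge0 {R : realFieldType} {A B C al be ga : R} :
  0 <= A -> 0 <= B -> C ^+ 2 <= A * B ->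
  0 <= al -> 0 <= be -> ga ^+ 2 <= al * be ->
  0 <= al * A + be * B - 2 * (ga * C).
Proof.
move=> A0 B0 CAB al0 be0 gab.
have aA0 : 0 <= al * A by rewrite mulr_ge0.
have bB0 : 0 <= be * B by rewrite mulr_ge0.
have prod : ga ^+ 2 * C ^+ 2 <= (al * A) * (be * B).
  by rewrite [leRHS]mulrACA; apply: ler_pM; rewrite ?sqr_ge0.
have amgm : 4 * ((al * A) * (be * B)) <= (al * A + be * B) ^+ 2.
  by have := sqr_ge0 (al * A - be * B); rewrite sqrrB sqrrD; lra.
have : `|2 * (ga * C)| <= al * A + be * B.
  rewrite -ler_sqr ?nnegrE ?addr_ge0 // real_normK ?num_real // !exprMn.
  by rewrite (_ : 2 ^+ 2 = 4) -?natrX //; lra.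
by have := ler_norm (2 * (ga * C)); lra.
Qed.

Section integrals_of_pairings.
Context {R : realType} {d : measure_display} {T : measurableType d}
  (mu : {measure set T -> \bar R}).
Local Open Scope ereal_scope.

Lemma ge0_integral_pinfty_of_le {f g h : T -> R} {c : R} :
  measurable_fun setT f -> measurable_fun setT g -> measurable_fun setT h ->
  (forall x, (0 <= f x)%R) -> (forall x, (0 <= g x)%R) -> (forall x, (0 <= h x)%R) ->
  (0 < c)%R -> (forall x, (c * g x <= f x + h x)%R) ->
  \int[mu]_x (g x)%:E = +oo -> \int[mu]_x (h x)%:E < +oo ->
  \int[mu]_x (f x)%:E = +oo.
Proof.
move=> mf mg mh f0 g0 h0 c0 cgfh goo hfin.
have cgoo : \int[mu]_x (c * g x)%:E = +oo.
  under eq_integral do rewrite EFinM.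
  rewrite ge0_integralZl ?lee_fin ?(ltW c0) ?goo //.
  - by rewrite muleC gt0_mulye ?lte_fin.
  - exact/measurable_EFinP.
  - by move=> x _; rewrite lee_fin.
have : +oo <= \int[mu]_x ((f x)%:E + (h x)%:E).
  rewrite -cgoo; apply: ge0_le_integral => //.
  - by move=> x _; rewrite lee_fin mulr_ge0 // ltW.
  - exact/measurable_EFinP/measurable_funM.
  - by apply: emeasurable_funD; exact/measurable_EFinP.
  - by move=> x _; rewrite -EFinD lee_fin.
rewrite ge0_integralD //; last 4 first.
- by move=> x _; rewrite lee_fin.
- exact/measurable_EFinP.
- by move=> x _; rewrite lee_fin.
- exact/measurable_EFinP.
rewrite leye_eq => /eqP fhoo; apply/eqP; rewrite -leye_eq leNgt; apply/negP => ffin.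
by have := lte_add_pinfty ffin hfin; rewrite fhoo ltxx.
Qed.

Lemma integral_pairingE {A B C : T -> R} (al be ga : R) :
  mu.-integrable setT (fun x => (A x)%:E) -> mu.-integrable setT (fun x => (B x)%:E) ->
  mu.-integrable setT (fun x => (C x)%:E) ->
  \int[mu]_x (al * A x + be * B x - 2 * (ga * C x))%:E =
  (al * fine (\int[mu]_x (A x)%:E) + be * fine (\int[mu]_x (B x)%:E)
   - 2 * (ga * fine (\int[mu]_x (C x)%:E)))%:E.
Proof.
move=> iA iB iC.
have fineKE (F : T -> R) : mu.-integrable setT (fun x => (F x)%:E) ->
    \int[mu]_x (F x)%:E = (fine (\int[mu]_x (F x)%:E))%:E.
  by move=> iF; rewrite fineK // integrable_fin_num.
under eq_integral do rewrite mulrA EFinB EFinD (EFinM al) (EFinM be) (EFinM (2 * ga)).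
rewrite integralB //; last 2 first.
- by apply: integrableD => //; apply: integrableZl.
- exact: integrableZl.
rewrite integralD ?integralZl //; try exact: integrableZl.
by rewrite (fineKE A) // (fineKE B) // (fineKE C) //= -!EFinM -!EFinD mulrA.
Qed.

Lemma integral_CS {A B C : T -> R} :
  mu.-integrable setT (fun x => (A x)%:E) -> mu.-integrable setT (fun x => (B x)%:E) ->
  mu.-integrable setT (fun x => (C x)%:E) ->
  (forall x, 0 <= A x)%R -> (forall x, 0 <= B x)%R -> (forall x, C x ^+ 2 <= A x * B x)%R ->
  (fine (\int[mu]_x (C x)%:E) ^+ 2
   <= fine (\int[mu]_x (A x)%:E) * fine (\int[mu]_x (B x)%:E))%R.
Proof.
move=> iA iB iC A0 B0 CAB.
apply: discr_le_of_quadratic_ge0 => [|t].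
  by rewrite fine_ge0 // integral_ge0 // => x _; rewrite lee_fin.
have := integral_pairingE 1%R (t ^+ 2) t iA iB iC.
set a := fine _; set b := fine _; set c := fine _ => pairingE.
rewrite (_ : (a - 2 * t * c + t ^+ 2 * b = 1 * a + t ^+ 2 * b - 2 * (t * c))%R); last by ring.
rewrite -lee_fin -pairingE integral_ge0 // => x _; rewrite lee_fin.
apply: psd2_pairing_ge0 => //; first exact: sqr_ge0.
by rewrite mul1r.
Qed.

End integrals_of_pairings.

Lemma corr_score_fine0 {R : realType} (c a b : \bar R) :
  fine a = 0 \/ fine b = 0 -> corr_score c a b = 0.
Proof.
by rewrite /corr_score; case: ifP => // _ [->|->]; rewrite sqrtr0 ?mul0r ?mulr0 invr0 mulr0.
Qed.

Lemma corr_score_fin {R : realType} {c a b : R} : 0 <= a -> 0 <= b -> c ^+ 2 <= a * b ->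
  let rho := corr_score c%:E a%:E b%:E in
  [/\ 0 <= rho, rho <= 1 & c <= rho * (Num.sqrt a * Num.sqrt b)].
Proof.
move=> a0 b0 cab /=; rewrite /corr_score /= !eqe.
have [ab0|ab0] := boolP ((a == 0) || (b == 0)).
  have c0 : c = 0.
    apply/eqP; rewrite -sqrf_eq0 eq_le sqr_ge0 andbT.
    by case/orP: ab0 cab => /eqP->; rewrite ?mul0r ?mulr0.
  by rewrite c0 mul0r lexx ler01.
move: ab0; rewrite negb_or => /andP[a_neq0 b_neq0].
have sab : 0 < Num.sqrt a * Num.sqrt b.
  by apply: mulr_gt0; rewrite sqrtr_gt0 lt0r ?a_neq0 ?b_neq0 ?a0 ?b0.
split.
- by rewrite divr_ge0 // ltW.
- rewrite ler_pdivrMr // mul1r -sqrtrM // -(sqrtr_sqr c).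
  by rewrite ler_sqrt // mulr_ge0.
- by rewrite divfK ?gt_eqF // ler_norm.
Qed.

Section gamma_factor.
Context {R : realType} (n m : nat) (lam : R).
Hypotheses (m_gt0 : (0 < m)%N) (lam_ge0 : 0 <= lam).

Let N : R := (n + m)%N%:R.
Let kap : R := m%:R ^+ 2 / (N * (m%:R + n%:R * lam)).
Let k : R := (m%:R + n%:R * lam) / N.
Let be : R := m%:R / N.

Let m_pos : 0 < m%:R :> R. Proof. by rewrite ltr0n. Qed.
Let N_pos : 0 < N. Proof. by rewrite ltr0n addn_gt0 m_gt0 orbT. Qed.
Let mnlam_pos : 0 < m%:R + n%:R * lam. Proof. by rewrite ltr_wpDr // mulr_ge0. Qed.

Let kap_k : kap * k = be ^+ 2.
Proof. by rewrite /kap /k /be; field; rewrite -natrD (gt_eqF N_pos) (gt_eqF mnlam_pos). Qed.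

Let kap_le_be : kap <= be.
Proof.
rewrite (_ : kap = be * (m%:R / (m%:R + n%:R * lam))); last first.
  by rewrite /kap /be; field; rewrite -natrD (gt_eqF N_pos) (gt_eqF mnlam_pos).
by rewrite ger_pMr ?divr_gt0 // ler_pdivrMr // mul1r lerDl mulr_ge0.
Qed.

Lemma gamma_nml_ge (rho : R) : 0 <= rho <= 1 -> n%:R / N <= gamma_nml n m lam rho.
Proof.
case/andP => rho0 rho1; rewrite /gamma_nml -/N -/kap.
have -> : n%:R / N = 1 - be by rewrite /be /N natrD; field; rewrite -natrD gt_eqF.
rewrite lerD2l lerN2; apply: le_trans kap_le_be.
by rewrite ger_pMr ?expr_le1 // divr_gt0 ?mulr_gt0 // exprn_gt0.
Qed.

Lemma gamma_nml_mul_le (a b c rho : R) : 0 <= a -> 0 <= b -> 0 <= rho ->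
  c <= rho * (Num.sqrt a * Num.sqrt b) ->
  a * gamma_nml n m lam rho <= a + k * b - 2 * (be * c).
Proof.
move=> a0 b0 rho0 c_le; rewrite /gamma_nml -/N -/kap -subr_ge0.
have k_pos : 0 < k by rewrite divr_gt0.
rewrite -(pmulr_rge0 _ k_pos).
set x := Num.sqrt a; set y := Num.sqrt b.
have -> : a = x ^+ 2 by rewrite sqr_sqrtr.
have -> : b = y ^+ 2 by rewrite sqr_sqrtr.
(* completing the square, using [kap * k = be ^+ 2] *)
have -> : k * (x ^+ 2 + k * y ^+ 2 - 2 * (be * c) - x ^+ 2 * (1 - kap * rho ^+ 2)) =
    (k * y - be * rho * x) ^+ 2 + 2 * k * be * (rho * (x * y) - c)
    + (kap * k - be ^+ 2) * rho ^+ 2 * x ^+ 2 by ring.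
rewrite kap_k subrr mul0r mul0r addr0 addr_ge0 ?sqr_ge0 //.
by rewrite !mulr_ge0 ?subr_ge0 ?invr_ge0 ?(ltW mnlam_pos) ?(ltW N_pos).
Qed.

End gamma_factor.

Section excess_bound.
Context {R : realType} {d : measure_display} {T : measurableType d}
  (mu : {measure set T -> \bar R}) (A B C : T -> R) (n m : nat) (lam : R).
Hypotheses (n_gt0 : (0 < n)%N) (m_gt0 : (0 < m)%N) (lam_ge0 : 0 <= lam)
  (mA : measurable_fun setT A) (mB : measurable_fun setT B) (mC : measurable_fun setT C)
  (A0 : forall x, 0 <= A x) (B0 : forall x, 0 <= B x)
  (CAB : forall x, C x ^+ 2 <= A x * B x).
Local Open Scope ereal_scope.

Let N : R := (n + m)%N%:R.
Let k : R := (m%:R + n%:R * lam) / N.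
Let be : R := m%:R / N.
Let exc x : R := A x + k * B x - 2 * (be * C x).

Let N_pos : (0 < N)%R. Proof. by rewrite ltr0n addn_gt0 n_gt0. Qed.
Let k_pos : (0 < k)%R.
Proof. by apply: divr_gt0 => //; rewrite ltr_wpDr ?mulr_ge0 ?ltr0n. Qed.
Let be_pos : (0 < be)%R. Proof. by apply: divr_gt0 => //; rewrite ltr0n. Qed.
Let nN_pos : (0 < n%:R / N)%R. Proof. by apply: divr_gt0 => //; rewrite ltr0n. Qed.
Let nNE : (n%:R / N = 1 - be)%R.
Proof. by rewrite /be /N natrD; field; rewrite -natrD gt_eqF. Qed.

Let mexc : measurable_fun setT exc.
Proof.
apply: measurable_funB; first exact/measurable_funD/measurable_funM.
exact/measurable_funM/measurable_funM.
Qed.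

Let exc_geA x : (n%:R / N * A x <= exc x + 0)%R.
Proof.
rewrite addr0 -subr_ge0 nNE /exc.
have -> : (A x + k * B x - 2 * (be * C x) - (1 - be) * A x =
    be * A x + k * B x - 2 * (be * C x))%R by ring.
apply: psd2_pairing_ge0 (A0 x) (B0 x) (CAB x) (ltW be_pos) (ltW k_pos) _.
by rewrite expr2 ler_pM2l // /k /be ler_pM2r ?invr_gt0 // lerDl mulr_ge0.
Qed.

Let exc_ge0 x : (0 <= exc x)%R.
Proof. by rewrite -[exc x]addr0; apply: le_trans (exc_geA x); rewrite mulr_ge0 // ltW. Qed.

Let integral_exc_pinftyA : \int[mu]_x (A x)%:E = +oo -> \int[mu]_x (exc x)%:E = +oo.
Proof.
move=> IA_oo; apply: (ge0_integral_pinfty_of_le mu mexc mA (measurable_cst _) exc_ge0 A0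
  (fun=> lexx 0) nN_pos exc_geA IA_oo).
by rewrite integral0.
Qed.

Let integral_exc_pinftyB : \int[mu]_x (A x)%:E < +oo -> \int[mu]_x (B x)%:E = +oo ->
  \int[mu]_x (exc x)%:E = +oo.
Proof.
move=> IA_fin IB_oo.
(* AM-GM: 2 be C <= (2 be^2 / k) A + (k / 2) B *)
pose c' := (2 * be ^+ 2 / k)%R.
have c'_ge0 : (0 <= c')%R by apply: divr_ge0 _ (ltW k_pos); rewrite mulr_ge0 ?sqr_ge0.
have mcA : measurable_fun setT (fun x => c' * A x)%R by exact: measurable_funM.
apply: (ge0_integral_pinfty_of_le mu mexc mB mcA exc_ge0 B0 (fun x => mulr_ge0 c'_ge0 (A0 x))
  (_ : 0 < k / 2)%R _ IB_oo).
- by rewrite divr_gt0.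
- move=> x; rewrite -subr_ge0 /exc.
  have -> : (A x + k * B x - 2 * (be * C x) + c' * A x - k / 2 * B x =
    (1 + c') * A x + k / 2 * B x - 2 * (be * C x))%R.
    by rewrite /c'; field; exact: lt0r_neq0.
  apply: psd2_pairing_ge0 (A0 x) (B0 x) (CAB x) _ _ _.
  + by rewrite addr_ge0.
  + by rewrite divr_ge0 // ltW.
  + rewrite mulrDl mul1r /c' (_ : 2 * be ^+ 2 / k * (k / 2) = be ^+ 2)%R.
      by rewrite lerDr divr_ge0 ?ltW.
    by field; exact: lt0r_neq0.
- rewrite (eq_integral (fun x => c'%:E * (A x)%:E)) => [|x _]; last by rewrite EFinM.
  rewrite ge0_integralZl_EFin //.
  + by rewrite lte_mul_pinfty ?lee_fin.
  + by move=> x _; rewrite lee_fin.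
  + exact/measurable_EFinP.
Qed.

Let excess_bound_fin : \int[mu]_x (A x)%:E < +oo -> \int[mu]_x (B x)%:E < +oo ->
  let rho := corr_score (\int[mu]_x (C x)%:E) (\int[mu]_x (A x)%:E)
                        (\int[mu]_x (B x)%:E) in
  let gam := gamma_nml n m lam rho in
  (n%:R / N <= gam)%R /\ \int[mu]_x (A x)%:E <= \int[mu]_x (exc x)%:E * (gam^-1)%:E.
Proof.
move=> IA_fin IB_fin rho gam.
have iA := ge0_integrable_lty mu mA A0 IA_fin.
have iB := ge0_integrable_lty mu mB B0 IB_fin.
have iC : mu.-integrable setT (fun x => (C x)%:E).
  apply: (integrable_le_normD mu iA iB mC) => x.
  rewrite (ger0_norm (A0 x)) (ger0_norm (B0 x)) -ler_sqr ?nnegrE ?addr_ge0 //.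
  rewrite real_normK ?num_real // sqrrD.
  have := CAB x; have := mulr_ge0 (A0 x) (B0 x).
  by have := sqr_ge0 (A x); have := sqr_ge0 (B x); lra.
have cab := integral_CS mu iA iB iC A0 B0 CAB.
set a := fine (\int[mu]_x (A x)%:E) in cab *.
set b := fine (\int[mu]_x (B x)%:E) in cab *.
set c := fine (\int[mu]_x (C x)%:E) in cab *.
have IAE : \int[mu]_x (A x)%:E = a%:E by rewrite fineK // integrable_fin_num.
have IBE : \int[mu]_x (B x)%:E = b%:E by rewrite fineK // integrable_fin_num.
have ICE : \int[mu]_x (C x)%:E = c%:E by rewrite fineK // integrable_fin_num.
have a0 : (0 <= a)%R by rewrite fine_ge0 // integral_ge0 // => x _; rewrite lee_fin.
have b0 : (0 <= b)%R by rewrite fine_ge0 // integral_ge0 // => x _; rewrite lee_fin.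
have [rho0 rho1 c_le] := corr_score_fin a0 b0 cab.
rewrite -IAE -IBE -ICE -/rho in rho0 rho1 c_le.
have gam_ge : (n%:R / N <= gam)%R by apply: gamma_nml_ge; rewrite ?rho0.
split => //.
have excE : \int[mu]_x (exc x)%:E = (a + k * b - 2 * (be * c))%:E.
  transitivity (\int[mu]_x (1 * A x + k * B x - 2 * (be * C x))%:E).
    by apply: eq_integral => x _; rewrite mul1r.
  by rewrite integral_pairingE // mul1r.
rewrite excE IAE -EFinM lee_fin ler_pdivlMr ?(lt_le_trans nN_pos) //.
exact: gamma_nml_mul_le.
Qed.

Lemma integral_excess_bound :
  let rho := corr_score (\int[mu]_x (C x)%:E) (\int[mu]_x (A x)%:E)
                        (\int[mu]_x (B x)%:E) in
  let gam := gamma_nml n m lam rho in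
  (n%:R / (n + m)%N%:R <= gam)%R /\
  \int[mu]_x (A x)%:E
  <= \int[mu]_x (A x + (m%:R + n%:R * lam) / (n + m)%N%:R * B x
                 - 2 * (m%:R / (n + m)%N%:R * C x))%:E * (gam^-1)%:E.
Proof.
move=> rho gam.
(* in the infinite cases [rho = 0] by the junk value [x / 0 = 0], so [gam = 1] *)
have infinite_case : fine (\int[mu]_x (A x)%:E) = 0%R \/ fine (\int[mu]_x (B x)%:E) = 0%R ->
    \int[mu]_x (exc x)%:E = +oo -> (n%:R / N <= gam)%R /\
    \int[mu]_x (A x)%:E <= \int[mu]_x (exc x)%:E * (gam^-1)%:E.
  move=> /(corr_score_fine0 (\int[mu]_x (C x)%:E)); rewrite -/rho => rho0 ->.
  rewrite /gam rho0 /gamma_nml expr0n mulr0 subr0 invr1 mule1 leey.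
  by rewrite nNE gerBl ltW.
have [IA_fin|] := ltP (\int[mu]_x (A x)%:E) +oo; last first.
  rewrite leye_eq => /eqP IA_oo.
  by apply: infinite_case; [left; rewrite IA_oo | exact: integral_exc_pinftyA].
have [IB_fin|] := ltP (\int[mu]_x (B x)%:E) +oo; last first.
  rewrite leye_eq => /eqP IB_oo.
  by apply: infinite_case; [right; rewrite IB_oo | exact: integral_exc_pinftyB].
exact: excess_bound_fin.
Qed.

End excess_bound.

Section parametric_dotL2.
Context {R : realType} {d dD : measure_display} {Om : measurableType d}
  {OmD : measurableType dD} (P : {sigma_finite_measure set Om -> \bar R}).

Lemma measurable_dotL2_sqr (phi : OmD * Om -> R) : measurable_fun setT phi ->
  measurable_fun setT (fun v => dotL2 P (fun w => phi (v, w)) (fun w => phi (v, w))).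
Proof.
move=> mphi; apply: (measurableT_comp (fine_measurable measurableT)).
apply: (measurable_fun_fubini_tonelli_F (m2 := P) (fun p => (phi p * phi p)%:E)).
  exact/measurable_EFinP/measurable_funM.
by move=> p; rewrite lee_fin -expr2 sqr_ge0.
Qed.

Lemma measurable_dotL2 (phi psi : OmD * Om -> R) :
  measurable_fun setT phi -> measurable_fun setT psi ->
  (forall v, L2 P (fun w => phi (v, w))) -> (forall v, L2 P (fun w => psi (v, w))) ->
  measurable_fun setT (fun v => dotL2 P (fun w => phi (v, w)) (fun w => psi (v, w))).
Proof.
move=> mphi mpsi hphi hpsi.
rewrite (_ : (fun v => _) = fun v =>
    (dotL2 P (fun w => phi (v, w) + psi (v, w)) (fun w => phi (v, w) + psi (v, w))
   - dotL2 P (fun w => phi (v, w) - psi (v, w)) (fun w => phi (v, w) - psi (v, w))) / 4).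
  apply: measurable_funM => //; apply: measurable_funB.
  - by apply: (measurable_dotL2_sqr (fun p => phi p + psi p)); exact: measurable_funD.
  - by apply: (measurable_dotL2_sqr (fun p => phi p - psi p)); exact: measurable_funB.
by apply/funext => v; rewrite dotL2_polarization.
Qed.

End parametric_dotL2.

Lemma measurable_param_comp {R : realType} {dD d dT : measure_display}
  {OmD : measurableType dD} {Om : measurableType d} {T : measurableType dT}
  {h : OmD -> T -> R} {V : Om -> T} :
  measurable_fun setT (fun p : OmD * T => h p.1 p.2) -> measurable_fun setT V ->
  measurable_fun setT (fun p : OmD * Om => h p.1 (V p.2)).
Proof.
move=> mh mV; apply: (measurableT_comp (f := fun p : OmD * T => h p.1 p.2)
  (g := fun p : OmD * Om => (p.1, V p.2))) => //.
exact: measurable_fun_pair measurable_fst (measurableT_comp mV measurable_snd).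
Qed.

Section population_minimiser.
Context {R : realType} {d : measure_display} {Om : measurableType d} {P : probability Om R}
  {dX dW : measure_display} {TX : measurableType dX} {TW : measurableType dW}
  {X : Om -> TX} {W : Om -> TW} {Y : Om -> R} {n m : nat} {lam : R}
  {F : set (TX -> R)} {G : set (TX * TW -> R)} {fstar : TX -> R} {gstar : TX * TW -> R}
  {mu : TX -> R} {eta : TX * TW -> R}.
Hypotheses (mX : measurable_fun setT X) (mW : measurable_fun setT W)
  (mY : measurable_fun setT Y) (Y2 : sq_integrable P Y)
  (n_gt0 : (0 < n)%N) (m_gt0 : (0 < m)%N) (lam_ge0 : 0 <= lam)
  (FL2 : subset_L2 P X F) (GL2 : subset_L2 P (fun w => (X w, W w)) G)
  (Gcvx : convex_L2 P (fun w => (X w, W w)) G)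
  (Ffstar : F fstar) (Ggstar : G gstar)
  (minimizer : forall f g, F f -> G g ->
      (loss P X W Y n m lam fstar gstar <= loss P X W Y n m lam f g)%E)
  (mu_ce : is_cond_exp P X Y mu) (eta_ce : is_cond_exp P (fun w => (X w, W w)) Y eta)
  (muF : L2mem P X F mu) (muG : L2mem P (fun w => (X w, W w)) G (fun z => mu z.1))
  (etaG : L2mem P (fun w => (X w, W w)) G eta).

Let N : R := (n + m)%N%:R.
Let c1 : R := n%:R / N.
Let c2 : R := m%:R / N.
Let c3 : R := lam * (n%:R / N).
Let t : R := m%:R / (m%:R + n%:R * lam).
Let M w := mu (X w).
Let E w := eta (X w, W w).

Let N_pos : 0 < N. Proof. by rewrite ltr0n addn_gt0 n_gt0. Qed.
Let mnlam_pos : 0 < m%:R + n%:R * lam.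
Proof. by rewrite ltr_wpDr ?mulr_ge0 ?ltr0n. Qed.

Let c_t : c2 * (1 - t) = c3 * t.
Proof. by rewrite /c2 /c3 /t; field; rewrite -natrD (gt_eqF N_pos) (gt_eqF mnlam_pos). Qed.

Let mZ : measurable_fun setT (fun w => (X w, W w)).
Proof. exact: measurable_fun_pair. Qed.

Let L2Y : L2 P Y. Proof. exact: conj mY Y2. Qed.

Let L2F {f} : F f -> L2 P (fun w => f (X w)).
Proof. by move=> /FL2; exact: L2_inL2. Qed.

Let L2G {g} : G g -> L2 P (fun w => g (X w, W w)).
Proof. by move=> /GL2; exact: L2_inL2. Qed.

Let L2M : L2 P M.
Proof.
have [f1 /L2F hf1 ae1] := muF; apply: (L2_ae P hf1) => //.
by case: mu_ce => mmu _ _; exact: measurableT_comp.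
Qed.

Let L2E : L2 P E.
Proof.
have [g2 /L2G hg2 ae2] := etaG; apply: (L2_ae P hg2) => //.
by case: eta_ce => meta _ _; exact: measurableT_comp.
Qed.

Let L2_integrableY : P.-integrable setT (fun w => (Y w)%:E).
Proof. exact: L2_integrable. Qed.

Let loss_lossL2 f g : F f -> G g -> loss P X W Y n m lam f g =
  (lossL2 P Y c1 c2 c3 (fun w => f (X w)) (fun w => g (X w, W w)))%:E.
Proof.
move=> /L2F hf /L2G hg; rewrite /loss /lossL2 /=.
under eq_integral do rewrite expr2.
under [X in (_ + _ * X + _)%E]eq_integral do rewrite expr2.
under [X in (_ + _ + _ * X)%E]eq_integral do rewrite expr2.
by rewrite !dotL2E; L2_closure.
Qed.

Let orthoX h : measurable_fun setT h -> L2 P (fun w => h (X w)) ->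
  dotL2 P Y (fun w => h (X w)) = dotL2 P M (fun w => h (X w)).
Proof.
move=> mh hh; rewrite /dotL2; congr fine.
exact: (cond_exp_orthogonal P mX L2_integrableY mu_ce mh
  (L2_integrableM P L2Y hh) (L2_integrableM P L2M hh)).
Qed.

Let orthoZ k : measurable_fun setT k -> L2 P (fun w => k (X w, W w)) ->
  dotL2 P Y (fun w => k (X w, W w)) = dotL2 P E (fun w => k (X w, W w)).
Proof.
move=> mk hk; rewrite /dotL2; congr fine.
exact: (cond_exp_orthogonal P mZ L2_integrableY eta_ce mk
  (L2_integrableM P L2Y hk) (L2_integrableM P L2E hk)).
Qed.

Let orthoEX h : measurable_fun setT h -> L2 P (fun w => h (X w)) ->
  dotL2 P E (fun w => h (X w)) = dotL2 P M (fun w => h (X w)).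
Proof.
move=> mh hh; rewrite -orthoX // (orthoZ (fun z => h z.1)) //.
exact: measurableT_comp.
Qed.

Let excess_lossL2 {f0 f g0 g} : F f0 -> F f -> G g0 -> G g ->
  (forall h, L2 P h -> dotL2 P (fun w => f0 (X w)) h = dotL2 P M h) ->
  (forall h, L2 P h ->
     dotL2 P (fun w => g0 (X w, W w)) h = t * dotL2 P M h + (1 - t) * dotL2 P E h) ->
  let a := fun w => f (X w) - f0 (X w) in
  let b := fun w => g (X w, W w) - g0 (X w, W w) in
  lossL2 P Y c1 c2 c3 (fun w => f (X w)) (fun w => g (X w, W w))
  - lossL2 P Y c1 c2 c3 (fun w => f0 (X w)) (fun w => g0 (X w, W w)) =
  c1 * dotL2 P a a + c2 * dotL2 P (fun w => b w - a w) (fun w => b w - a w)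
  + c3 * dotL2 P b b.
Proof.
move=> Ff0 Ff Gg0 Gg f0M g0ME a b.
have mfB : measurable_fun setT (fun x => f x - f0 x).
  by apply: measurable_funB; [exact: (FL2 _ Ff).1 | exact: (FL2 _ Ff0).1].
have mgB : measurable_fun setT (fun z => g z - g0 z).
  by apply: measurable_funB; [exact: (GL2 _ Gg).1 | exact: (GL2 _ Gg0).1].
have ha : L2 P a by apply: L2B; [exact: L2F | exact: L2F].
have hb : L2 P b by apply: L2B; [exact: L2G | exact: L2G].
apply: (lossL2_sub_min P Y c1 c2 c3 (M := M) (E := E) t) => //; try exact: L2F; try exact: L2G.
- exact: (orthoX _ mfB ha).
- exact: (orthoEX _ mfB ha).
- exact: (orthoZ _ mgB hb).
Qed.

Let minimizer_dotL2 :
  (forall h, L2 P h -> dotL2 P (fun w => fstar (X w)) h = dotL2 P M h) /\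
  (forall h, L2 P h ->
     dotL2 P (fun w => gstar (X w, W w)) h = t * dotL2 P M h + (1 - t) * dotL2 P E h).
Proof.
have [f1 Ff1 ae1] := muF; have [g1 Gg1 aeg1] := muG; have [g2 Gg2 ae2] := etaG.
have t01 : 0 <= t <= 1.
  by rewrite divr_ge0 ?ler_pdivrMr // ?mul1r ?lerDl ?mulr_ge0 // ltW.
have [g3 Gg3 ae3] := Gcvx g1 g2 t Gg1 Gg2 t01.
have f1M h : L2 P h -> dotL2 P (fun w => f1 (X w)) h = dotL2 P M h.
  by move=> hh; apply: ae_eq_dotL2 => //; exact: L2F.
have g3ME h : L2 P h ->
    dotL2 P (fun w => g3 (X w, W w)) h = t * dotL2 P M h + (1 - t) * dotL2 P E h.
  move=> hh; rewrite -dotL2Zl // -[X in _ + X]dotL2Zl // -dotL2Dl; try by L2_closure.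
  apply: ae_eq_dotL2 => //; [exact: L2G | by L2_closure |].
  apply: filterS3 ae3 aeg1 ae2 => w h3 h1 h2.
  by rewrite /M /E h3 h1 h2.
have c1_pos : 0 < c1 by apply: divr_gt0 _ N_pos; rewrite ltr0n.
have c2_pos : 0 < c2 by apply: divr_gt0 _ N_pos; rewrite ltr0n.
have c3_ge0 : 0 <= c3 := mulr_ge0 lam_ge0 (ltW c1_pos).
have := minimizer _ _ Ff1 Gg3.
rewrite !loss_lossL2 // lee_fin -subr_le0 (excess_lossL2 Ff1 Ffstar Gg3 Ggstar f1M g3ME).
have ha : L2 P (fun w => fstar (X w) - f1 (X w)) by apply: L2B; exact: L2F.
have hb : L2 P (fun w => gstar (X w, W w) - g3 (X w, W w)) by apply: L2B; exact: L2G.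
move=> /(lossL2_quad_eq0 P c1 c2 c3 ha hb c1_pos c2_pos c3_ge0) [na nb].
split=> h hh; apply/eqP; rewrite -subr_eq0.
- rewrite -(f1M h hh) -dotL2Bl //; try exact: L2F.
  by rewrite (dotL2_null P h ha hh na).
- rewrite -(g3ME h hh) -dotL2Bl //; try exact: L2G.
  by rewrite (dotL2_null P h hb hh nb).
Qed.

Lemma excess_loss {f g} : F f -> G g ->
  let ef := fun w => fstar (X w) - f (X w) in
  let eg := fun w => gstar (X w, W w) - g (X w, W w) in
  (loss P X W Y n m lam f g - loss P X W Y n m lam fstar gstar =
   (dotL2 P ef ef + (m%:R + n%:R * lam) / (n + m)%N%:R * dotL2 P eg eg
    - 2 * (m%:R / (n + m)%N%:R * dotL2 P ef eg))%:E)%E.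
Proof.
move=> Ff Gg ef eg; have [fstarM gstarME] := minimizer_dotL2.
rewrite !loss_lossL2 // -EFinB (excess_lossL2 Ffstar Ff Ggstar Gg fstarM gstarME).
have hf := L2F Ff; have hg := L2G Gg; have hfs := L2F Ffstar; have hgs := L2G Ggstar.
congr EFin.
set a := fun w => f (X w) - fstar (X w); set b := fun w => g (X w, W w) - gstar (X w, W w).
rewrite (dotL2_sqrB P (u := b) (v := a)); try by L2_closure.
have -> : dotL2 P a a = dotL2 P ef ef by apply: eq_dotL2 => w; rewrite /a /ef; ring.
have -> : dotL2 P b b = dotL2 P eg eg by apply: eq_dotL2 => w; rewrite /b /eg; ring.
have -> : dotL2 P b a = dotL2 P ef eg by apply: eq_dotL2 => w; rewrite /a /b /ef /eg; ring.
by rewrite /c1 /c2 /c3 /N; field; rewrite -natrD (gt_eqF N_pos).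
Qed.

Lemma excess_risk {f} : F f ->
  let ef := fun w => fstar (X w) - f (X w) in
  (\int[P]_w ((f (X w) - mu (X w)) ^+ 2)%:E = (dotL2 P ef ef)%:E)%E.
Proof.
move=> /L2F hf ef; have hfs := L2F Ffstar; have [fstarM _] := minimizer_dotL2.
rewrite (dotL2_sqrE P (L2B P hf L2M)); congr EFin.
rewrite !dotL2_sqrB // (fstarM _ hfs) (dotL2C P M) (fstarM _ L2M) (fstarM _ hf).
by rewrite /M (dotL2C P (fun w => mu (X w))); ring.
Qed.

Lemma measurable_excess_terms {dD : measure_display} {OmD : measurableType dD}
  {fh : OmD -> TX -> R} {gh : OmD -> TX * TW -> R} :
  (forall v, F (fh v)) -> (forall v, G (gh v)) ->
  measurable_fun setT (fun p : OmD * TX => fh p.1 p.2) ->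
  measurable_fun setT (fun p : OmD * (TX * TW) => gh p.1 p.2) ->
  let ef v w := fstar (X w) - fh v (X w) in
  let eg v w := gstar (X w, W w) - gh v (X w, W w) in
  [/\ measurable_fun setT (fun v => dotL2 P (ef v) (ef v)),
      measurable_fun setT (fun v => dotL2 P (eg v) (eg v)) &
      measurable_fun setT (fun v => dotL2 P (ef v) (eg v))].
Proof.
move=> Ffh Ggh mfh mgh ef eg.
have mef : measurable_fun setT (fun p : OmD * Om => ef p.1 p.2).
  apply: measurable_funB (measurable_param_comp mfh mX).
  exact: measurableT_comp (FL2 _ Ffstar).1 (measurableT_comp mX measurable_snd).
have meg : measurable_fun setT (fun p : OmD * Om => eg p.1 p.2).
  apply: measurable_funB (measurable_param_comp mgh mZ).
  exact: measurableT_comp (GL2 _ Ggstar).1 (measurableT_comp mZ measurable_snd).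
split; [exact: measurable_dotL2_sqr mef | exact: measurable_dotL2_sqr meg |].
apply: (measurable_dotL2 P _ _ mef meg) => v; apply: L2B.
- exact: L2F Ffstar.
- exact: L2F (Ffh v).
- exact: L2G Ggstar.
- exact: L2G (Ggh v).
Qed.

End population_minimiser.


Theorem corollary2p3
  (R : realType)
  (* test point (X, W, Y) ~ P_{X,W,Y}, on a probability space (Om, P) *)
  (d : measure_display) (Om : measurableType d) (P : probability Om R)
  (dX dW : measure_display) (TX : measurableType dX) (TW : measurableType dW)
  (X : Om -> TX) (W : Om -> TW) (Y : Om -> R)
  (mX : measurable_fun setT X) (mW : measurable_fun setT W)
  (mY : measurable_fun setT Y) (Y2 : sq_integrable P Y)
  (n m : nat) (n_ge1 : (1 <= n)%N) (m_ge1 : (1 <= m)%N)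
  (lam : R) (lam_ge0 : 0 <= lam)
  (* training data, on a probability space (OmD, Q) (independent of the test point) *)
  (dD : measure_display) (OmD : measurableType dD) (Q : probability OmD R)
  (ZL : 'I_n -> OmD -> TX * TW) (YL : 'I_n -> OmD -> R)
  (ZU : 'I_m -> OmD -> TX * TW)
  (mZL : forall i, measurable_fun setT (ZL i))
  (mYL : forall i, measurable_fun setT (YL i))
  (mZU : forall j, measurable_fun setT (ZU j))
  (indep : mutually_indep Q (fun k : 'I_n + 'I_m =>
      match k with
      | inl i => events_of (fun v => (ZL i v, YL i v))
      | inr j => events_of (ZU j)
      end))
  (lawL : forall i, same_law Q P (fun v => (ZL i v, YL i v))
                                  (fun w => ((X w, W w), Y w)))
  (lawU : forall j, same_law Q P (ZU j) (fun w => (X w, W w)))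
  (* the classes F subset L2(P_X), G subset L2(P_Z) *)
  (F : set (TX -> R)) (G : set (TX * TW -> R))
  (F0 : F !=set0) (G0 : G !=set0)
  (FL2 : subset_L2 P X F) (GL2 : subset_L2 P (fun w => (X w, W w)) G)
  (Fcl : closed_L2 P X F) (Gcl : closed_L2 P (fun w => (X w, W w)) G)
  (Fcvx : convex_L2 P X F) (Gcvx : convex_L2 P (fun w => (X w, W w)) G)
  (* a minimizer (fstar, gstar) of L(.,.;lam) over F x G *)
  (fstar : TX -> R) (gstar : TX * TW -> R) (Ffstar : F fstar) (Ggstar : G gstar)
  (minimizer : forall f g, F f -> G g ->
      (loss P X W Y n m lam fstar gstar <= loss P X W Y n m lam f g)%E)
  (* mu = E[Y | X], eta = E[Y | Z], mu in F, mu in G, eta in G *)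
  (mu : TX -> R) (eta : TX * TW -> R)
  (mu_ce : is_cond_exp P X Y mu) (eta_ce : is_cond_exp P (fun w => (X w, W w)) Y eta)
  (muF : L2mem P X F mu) (muG : L2mem P (fun w => (X w, W w)) G (fun z => mu z.1))
  (etaG : L2mem P (fun w => (X w, W w)) G eta)
  (* the estimator (fhat, ghat), a function of the data *)
  (Fhat : ('I_n -> (TX * TW) * R) * ('I_m -> TX * TW) -> TX -> R)
  (Ghat : ('I_n -> (TX * TW) * R) * ('I_m -> TX * TW) -> TX * TW -> R) :
  let data := fun v : OmD => (fun i => (ZL i v, YL i v), fun j => ZU j v) in
  let fhat := fun v => Fhat (data v) in
  let ghat := fun v => Ghat (data v) in
  (forall v, F (fhat v)) -> (forall v, G (ghat v)) ->
  measurable_fun setT (fun p : OmD * TX => fhat p.1 p.2) ->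
  measurable_fun setT (fun p : OmD * (TX * TW) => ghat p.1 p.2) ->
  let ef := fun v x => fstar x - fhat v x in
  let eg := fun v z => gstar z - ghat v z in
  let rho := corr_score
     (\int[Q]_v \int[P]_w (ef v (X w) * eg v (X w, W w))%:E)
     (\int[Q]_v \int[P]_w (ef v (X w) ^+ 2)%:E)
     (\int[Q]_v \int[P]_w (eg v (X w, W w) ^+ 2)%:E) in
  let gam := gamma_nml n m lam rho in
  n%:R / (n + m)%N%:R <= gam /\
  (\int[Q]_v \int[P]_w ((fhat v (X w) - mu (X w)) ^+ 2)%:E
   <= (\int[Q]_v (loss P X W Y n m lam (fhat v) (ghat v)
                  - loss P X W Y n m lam fstar gstar)) * (gam^-1)%:E)%E.
Proof.
move=> data fhat ghat Fh Gh mfh mgh ef eg rho gam.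
have Lef v : L2 P (fun w => ef v (X w)).
  by apply: L2B; apply: L2_inL2 mX _; apply: FL2.
have Leg v : L2 P (fun w => eg v (X w, W w)).
  by apply: L2B; apply: L2_inL2 (measurable_fun_pair mX mW) _; apply: GL2.
have [mA mB mC] := measurable_excess_terms mX mW FL2 GL2 Ffstar Ggstar Fh Gh mfh mgh.
have excess := excess_loss mX mW mY Y2 n_ge1 m_ge1 lam_ge0 FL2 GL2 Gcvx Ffstar Ggstar
  minimizer mu_ce eta_ce muF muG etaG.
have risk := excess_risk mX mW mY Y2 n_ge1 m_ge1 lam_ge0 FL2 GL2 Gcvx Ffstar Ggstar
  minimizer mu_ce eta_ce muF muG etaG.
rewrite /gam /rho (eq_integral _ _ (fun v _ => dotL2_sqrE P (Lef v))).
rewrite (eq_integral _ _ (fun v _ => dotL2_sqrE P (Leg v))).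
rewrite (eq_integral _ _ (fun v _ => dotL2E P (Lef v) (Leg v))).
rewrite (eq_integral _ _ (fun v _ => risk _ (Fh v))).
rewrite (eq_integral _ _ (fun v _ => excess _ _ (Fh v) (Gh v))).
apply: integral_excess_bound => // v; [exact: dotL2_ge0 | exact: dotL2_ge0 | exact: dotL2_CS].
Qed.
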